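(* Let $S$ be an epsilon-strongly $G$-graded ring such that $\epsilon_G:=\bigwedge\{\epsilon_g:g\in G\}$ exists and belongs to $B(\mathcal{E}_G)^*$. Then: (i) $\epsilon_GS=\bigoplus_{g\in G}\epsilon_GS_g$ is a strongly $G$-graded ring; (ii) if moreover $S$ is an epsilon-crossed product, then $\epsilon_GS$ is a crossed product.
   Context: $G$ is a group with identity $e$; $S=\bigoplus_{g\in G}S_g$ is an associative unital ring graded by $G$, $R=S_e$, $XY$ denotes finite sums of products. $S$ is epsilon-strongly graded: each ideal $S_gS_{g^{-1}}$ of $R$ has an identity $\epsilon_g$ with $\epsilon_gs=s=s\epsilon_{g^{-1}}$ for $s\in S_g$; $\epsilon_e=1_S$; each $\epsilon_g$ is an idempotent in $Z(R)$. $B(\mathcal{E}_G)$ is the multiplicative semigroup generated by $\{\epsilon_g:g\in G\}$, $B(\mathcal{E}_G)^*=B(\mathcal{E}_G)\setminus\{0\}$, with partial order $a\le b$ iff $a=ab$; $\bigwedge$ denotes the greatest lower bound in this order. A ring is strongly $G$-graded if $A_gA_h=A_{gh}$ for all $g,h$. $S$ is an epsilon-crossed product if for each $g$ there are $s\in S_g$, $t\in S_{g^{-1}}$ with $st=\epsilon_g$, $ts=\epsilon_{g^{-1}}$. A graded unital ring is a crossed product if each homogeneous component contains an invertible element. *)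

From HB Require Import structures.
From mathcomp Require Import all_boot all_order all_algebra.
From mathcomp Require Import monoid.
Set Implicit Arguments. Unset Strict Implicit. Unset Printing Implicit Defensive.
Import GRing.Theory.
Local Open Scope ring_scope.

(* Subsets of S are predicates S -> Prop; a G-grading is a family
   C : G -> S -> Prop of homogeneous components. *)

Section Defs.
Variables (G : groupType) (S : pzRingType).

Definition prodspan (X Y : S -> Prop) (z : S) : Prop :=
  exists n (a b : 'I_n -> S),
    (forall i, X (a i) /\ Y (b i)) /\ z = \sum_(i < n) a i * b i.

Definition graded_ring (A : S -> Prop) (u : S) (C : G -> S -> Prop) : Prop :=
  [/\
      [/\ A 0, A u,
          (forall a b, A a -> A b -> A (a - b)),
          (forall a b, A a -> A b -> A (a * b)) &
          (forall a, A a -> u * a = a /\ a * u = a)],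
      (forall g, [/\ C g 0,
                     (forall a b, C g a -> C g b -> C g (a - b)) &
                     (forall a, C g a -> A a)]),
      (forall g h a b, C g a -> C h b -> C (g * h)%g (a * b)),
      (forall a, A a -> exists n (gs : 'I_n -> G) (x : 'I_n -> S),
          (forall i, C (gs i) (x i)) /\ a = \sum_(i < n) x i) &
      (forall n (gs : 'I_n -> G) (x : 'I_n -> S), injective gs ->
          (forall i, C (gs i) (x i)) -> \sum_(i < n) x i = 0 ->
          forall i, x i = 0)].

Definition strongly_graded (A : S -> Prop) (u : S) (C : G -> S -> Prop) : Prop :=
  graded_ring A u C /\
  forall g h z, C (g * h)%g z <-> prodspan (C g) (C h) z.

Definition crossed_product (A : S -> Prop) (u : S) (C : G -> S -> Prop) : Prop :=
  forall g, exists x y, [/\ C g x, A y, x * y = u & y * x = u].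

Definition epsilon_strongly_graded (Sg : G -> S -> Prop) (eps : G -> S) : Prop :=
  forall g,
    [/\ prodspan (Sg g) (Sg (g^-1)%g) (eps g),
        (forall x, prodspan (Sg g) (Sg (g^-1)%g) x -> eps g * x = x /\ x * eps g = x) &
        (forall s, Sg g s -> eps g * s = s /\ s * eps (g^-1)%g = s)].

Definition epsilon_crossed_product (Sg : G -> S -> Prop) (eps : G -> S) : Prop :=
  forall g, exists s t, [/\ Sg g s, Sg (g^-1)%g t,
                            s * t = eps g & t * s = eps (g^-1)%g].

(* B(E_G): multiplicative semigroup generated by the eps g *)
Definition inB (eps : G -> S) (x : S) : Prop :=
  exists n (gs : 'I_n.+1 -> G), x = \prod_(i < n.+1) eps (gs i).

Definition Ble (a b : S) : Prop := a = a * b.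

Definition is_meet_eps (eps : G -> S) (m : S) : Prop :=
  [/\ inB eps m,
      (forall g, Ble m (eps g)) &
      (forall b, inB eps b -> (forall g, Ble b (eps g)) -> Ble b m)].

Definition lmulset (m : S) (X : S -> Prop) (z : S) : Prop :=
  exists s, X s /\ z = m * s.

End Defs.

From HB Require Import structures.
From mathcomp Require Import all_boot all_order all_algebra.
From mathcomp Require Import monoid.
Import GRing.Theory.
Local Open Scope ring_scope.

Set Implicit Arguments.
Unset Strict Implicit.

(* Let S = (+)_g S_g be epsilon-strongly graded with idempotents eps g, and
   let epsG be the meet of the eps g in B(E_G).
   1. Each eps h lies in S_1 (it is a sum of products S_h S_{h^-1}), and the
      eps "shift" past homogeneous elements: s * eps h = eps (g h) * s for
      s in S_g; hence also for finite products of eps's.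
   2. Since epsG is itself a product of eps's lying below every eps g, it
      absorbs every such product; with the shift identity this makes epsG a
      central idempotent of S lying in S_1.
   3. For any central idempotent e in S_1, the corner eS is a G-graded ring
      with identity e and components e S_g.  If moreover e <= eps g for all g,
      then e S_g e S_h = e S_{gh}, because eps g, which is absorbed by e, is
      a sum of products S_g S_{g^-1}; and invertible pairs s t = eps g in
      S_g x S_{g^-1} become invertible pairs (es)(et) = e.
   The theorem combines 2 and 3. *)

Lemma subgroup_sum (V : zmodType) (C : V -> Prop) n (f : 'I_n -> V) :
  C 0 -> (forall a b, C a -> C b -> C (a - b)) ->
  (forall i, C (f i)) -> C (\sum_(i < n) f i).
Proof.
move=> C0 CB; elim: n f => [|n IH] f Cf; first by rewrite big_ord0.
rewrite big_ord_recr /= -[f _]opprK -[- f _]sub0r.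
exact: CB (IH _ (fun i => Cf _)) (CB _ _ C0 (Cf _)).
Qed.

Lemma graded_prodspan (G : groupType) (S : pzRingType) (A : S -> Prop) (u : S)
    (C : G -> S -> Prop) g h z :
  graded_ring A u C -> prodspan (C g) (C h) z -> C (g * h)%g z.
Proof.
move=> [_ Ccomp Cmul _ _] [n [a [b [Cab ->]]]].
have [C0 CB _] := Ccomp (g * h)%g.
by apply: subgroup_sum => // i; have [Ca Cb] := Cab i; apply: Cmul.
Qed.

Section EpsilonStronglyGraded.
Variables (G : groupType) (S : pzRingType) (Sg : G -> S -> Prop) (eps : G -> S).
Hypothesis gradedS : graded_ring (fun _ => True) 1 Sg.
Hypothesis epsS : epsilon_strongly_graded Sg eps.

Lemma homog_mul g h a b : Sg g a -> Sg h b -> Sg (g * h)%g (a * b).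
Proof. by case: gradedS => _ _ Smul _ _; apply: Smul. Qed.

Lemma eps_mull g s : Sg g s -> eps g * s = s.
Proof. by move=> Ss; have [_ _ /(_ s Ss) []] := epsS g. Qed.

Lemma eps_mulr g s : Sg (g^-1)%g s -> s * eps g = s.
Proof. by move=> Ss; have [_ _ /(_ s Ss) []] := epsS (g^-1)%g; rewrite invgK. Qed.

(* eps h is homogeneous of degree e, being a sum of products S_h S_{h^-1}. *)
Lemma eps_homog1 h : Sg 1%g (eps h).
Proof.
have [span_h _ _] := epsS h.
by rewrite -(mulgV h); apply: graded_prodspan gradedS span_h.
Qed.

Lemma eps_shift g h s : Sg g s -> s * eps h = eps (g * h)%g * s.
Proof.
move=> Ss.
have left_abs : s * eps h = eps (g * h)%g * (s * eps h).
  have [[n [a [b [Sab ->]]]] _ _] := epsS h.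
  rewrite !mulr_sumr; apply: eq_bigr => i _; have [Sa _] := Sab i.
  by rewrite !mulrA -[eps _ * s * a i]mulrA eps_mull //; apply: homog_mul.
have right_abs : eps (g * h)%g * s = eps (g * h)%g * s * eps h.
  have [[n [a [b [Sab ->]]]] _ _] := epsS (g * h)%g.
  rewrite !mulr_suml; apply: eq_bigr => i _; have [_ Sb] := Sab i.
  have Sbs : Sg (h^-1)%g (b i * s).
    have -> : (h^-1 = (g * h)^-1 * g)%g by rewrite invgM mulgVK.
    exact: homog_mul.
  by rewrite -!mulrA (mulrA (b i)) eps_mulr.
by rewrite left_abs mulrA -right_abs.
Qed.

Lemma prod_eps_shift g m (F : 'I_m -> G) s : Sg g s ->
  s * \prod_(i < m) eps (F i) = (\prod_(i < m) eps (g * F i)%g) * s.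
Proof.
move=> Ss; elim: m F => [|m IH] F; first by rewrite !big_ord0 mulr1 mul1r.
by rewrite !big_ord_recr /= mulrA IH -!mulrA (eps_shift _ Ss) mulrA.
Qed.

Lemma prod_eps_homog g m (F : 'I_m -> G) x :
  Sg g x -> Sg g ((\prod_(i < m) eps (F i)) * x).
Proof.
elim: m F x => [|m IH] F x Sx; first by rewrite big_ord0 mul1r.
rewrite big_ord_recr /= -mulrA; apply: IH.
by rewrite -(mul1g g); apply: homog_mul => //; apply: eps_homog1.
Qed.

Lemma prod_eps_homog1 m (F : 'I_m.+1 -> G) : Sg 1%g (\prod_(i < m.+1) eps (F i)).
Proof. by rewrite big_ord_recr /=; apply: prod_eps_homog; apply: eps_homog1. Qed.

Section Corner.
Variable e : S.
Hypothesis e_homog1 : Sg 1%g e.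
Hypothesis e_idem : e * e = e.
Hypothesis e_central : forall a, e * a = a * e.

Lemma corner_homog g s : Sg g s -> Sg g (e * s).
Proof. by move=> Ss; rewrite -(mul1g g); apply: homog_mul. Qed.

Lemma corner_mul a b : e * a * (e * b) = e * (a * b).
Proof. by rewrite -mulrA [a * _]mulrA -e_central !mulrA e_idem. Qed.

Lemma corner_graded :
  graded_ring (lmulset e (fun _ => True)) e (fun g => lmulset e (Sg g)).
Proof.
case: gradedS => _ Scomp _ Ssum Sdir; split.
- split.
  + by exists 0; rewrite mulr0.
  + by exists 1; rewrite mulr1.
  + by move=> _ _ [a [_ ->]] [b [_ ->]]; exists (a - b); rewrite mulrBr.
  + by move=> _ _ [a [_ ->]] [b [_ ->]]; exists (a * b); rewrite corner_mul.
  + move=> _ [a [_ ->]]; rewrite mulrA e_idem; split=> //.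
    by rewrite -mulrA -e_central mulrA e_idem.
- move=> g; have [S0 SB _] := Scomp g; split.
  + by exists 0; rewrite mulr0.
  + move=> _ _ [a [Sa ->]] [b [Sb ->]].
    by exists (a - b); rewrite mulrBr; split=> //; apply: SB.
  + by move=> _ [a [_ ->]]; exists a.
- move=> g h _ _ [a [Sa ->]] [b [Sb ->]].
  by exists (a * b); rewrite corner_mul; split=> //; apply: homog_mul.
- move=> _ [a [_ ->]]; have [n [gs [x [Sx ->]]]] := Ssum a I.
  exists n, gs, (fun i => e * x i); rewrite mulr_sumr; split=> // i.
  by exists (x i).
- move=> n gs x gs_inj Cx x_sum0; apply: (Sdir n gs x gs_inj) => // i.
  by have [s [Ss ->]] := Cx i; apply: corner_homog.
Qed.

Lemma corner_strong : (forall g, Ble e (eps g)) ->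
  strongly_graded (lmulset e (fun _ => True)) e (fun g => lmulset e (Sg g)).
Proof.
move=> e_le; split; first exact: corner_graded.
move=> g h z; split; last exact: graded_prodspan corner_graded.
move=> [s [Ss ->]]; have [[m [a [b [Sab eps_g]]]] _ _] := epsS g.
exists m, (fun i => e * a i), (fun i => e * (b i * s)); split.
  move=> i; have [Sa Sb] := Sab i; split; first by exists (a i).
  exists (b i * s); split=> //.
  by rewrite -(mulKg g h); apply: homog_mul.
rewrite {1}(e_le g) eps_g -mulrA mulr_suml mulr_sumr; apply: eq_bigr => i _.
by rewrite corner_mul !mulrA.
Qed.

Lemma corner_crossed : (forall g, Ble e (eps g)) ->
  epsilon_crossed_product Sg eps ->
  crossed_product (lmulset e (fun _ => True)) e (fun g => lmulset e (Sg g)).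
Proof.
move=> e_le cross g; have [s [t [Ss St st ts]]] := cross g.
exists (e * s), (e * t); split; [by exists s | by exists t | |].
- by rewrite corner_mul st -e_le.
- by rewrite corner_mul ts -e_le.
Qed.

End Corner.

Section Meet.
Variable epsG : S.
Hypothesis meetG : is_meet_eps eps epsG.

(* epsG absorbs any product of eps's, since epsG <= eps g for all g. *)
Lemma meet_absorbl m (F : 'I_m -> G) : epsG * \prod_(i < m) eps (F i) = epsG.
Proof.
have [_ le_eps _] := meetG.
elim: m F => [|m IH] F; first by rewrite big_ord0 mulr1.
by rewrite big_ord_recr /= mulrA IH -le_eps.
Qed.

Lemma meet_homog1 : Sg 1%g epsG.
Proof. by have [[n [gs ->]] _ _] := meetG; apply: prod_eps_homog1. Qed.

(* Absorption on the right, using that epsG commutes with elements of S_1. *)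
Lemma meet_absorbr m (F : 'I_m -> G) : (\prod_(i < m) eps (F i)) * epsG = epsG.
Proof.
rewrite -[RHS](meet_absorbl F) (prod_eps_shift F meet_homog1).
by congr (_ * _); apply: eq_bigr => i _; rewrite mul1g.
Qed.

(* epsG is idempotent, being absorbed by its own factors. *)
Lemma meet_idem : epsG * epsG = epsG.
Proof. by have [[n [gs epsGE]] _ _] := meetG; rewrite {2}epsGE meet_absorbl. Qed.

(* epsG is central: for s in S_g, both epsG s epsG = epsG s and
   epsG s epsG = s epsG follow from shifting epsG past s and absorption. *)
Lemma meet_central a : epsG * a = a * epsG.
Proof.
have [[n [gs epsGE]] _ _] := meetG.
have [_ _ _ Ssum _] := gradedS; have [k [hs [x [Sx ->]]]] := Ssum a I.
rewrite mulr_sumr mulr_suml; apply: eq_bigr => i _.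
have Sxi := Sx i; set g := hs i in Sxi *.
have shiftr : x i * epsG = (\prod_(j < n.+1) eps (g * gs j)%g) * x i.
  by rewrite {1}epsGE (prod_eps_shift _ Sxi).
have shiftl : epsG * x i = x i * \prod_(j < n.+1) eps (g^-1 * gs j)%g.
  rewrite {1}epsGE (prod_eps_shift _ Sxi); congr (_ * _).
  by apply: eq_bigr => j _; rewrite mulVKg.
have two_sided : epsG * x i * epsG = epsG * x i.
  by rewrite -mulrA shiftr mulrA meet_absorbl.
by rewrite -two_sided {1}shiftl -mulrA meet_absorbr.
Qed.

End Meet.

End EpsilonStronglyGraded.

Unset Implicit Arguments.

Theorem mainTheorem14 (G : groupType) (S : pzRingType)
    (Sg : G -> S -> Prop) (eps : G -> S) (epsG : S) :
  graded_ring (fun _ => True) 1 Sg ->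
  epsilon_strongly_graded Sg eps ->
  is_meet_eps eps epsG -> epsG != 0 ->
  strongly_graded (lmulset epsG (fun _ => True)) epsG
                  (fun g => lmulset epsG (Sg g)) /\
  (epsilon_crossed_product Sg eps ->
   crossed_product (lmulset epsG (fun _ => True)) epsG
                   (fun g => lmulset epsG (Sg g))).
Proof.
move=> gradedS epsS meetG _.
have [_ le_eps _] := meetG.
have homog1 := meet_homog1 gradedS epsS meetG.
have idem := meet_idem meetG.
have central := meet_central gradedS epsS meetG.
split; first exact: (corner_strong gradedS epsS homog1 idem central le_eps).
exact: (corner_crossed idem central le_eps).
Qed.
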